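(* Let $r\ge1$, $\mu\in\mathcal P_r$, and let $\mathbf x_n\in\Xi_n$ for every $n\in\mathbb N$. Let $d_r(\delta^\bullet_{\mathbf x_n},\mu)=\min_{\mathbf p\in\Pi_n}d_r(\delta^{\mathbf p}_{\mathbf x_n},\mu)$. Then $\lim_{n\to\infty}d_r(\delta^\bullet_{\mathbf x_n},\mu)=0$ if and only if $$\lim_{n\to\infty}\min_{1\le i\le n}|x-x_{n,i}|=0\quad\text{for every }x\in{\rm supp}\,\mu .$$ In particular, this condition holds whenever $\lim_{n\to\infty}\big(F_\mu(x_{n,1})+\max_{1\le i\le n-1}(x_{n,i+1}-x_{n,i})+1-F_\mu(x_{n,n})\big)=0$.
   Context: $\mathcal P$ denotes the set of Borel probability measures on $\mathbb R$; $\mathcal P_r=\{\mu\in\mathcal P:\int|x|^r{\rm d}\mu(x)<\infty\}$. For $\mu\in\mathcal P$, $F_\mu(x)=\mu(]-\infty,x])$ and $F_\mu^{-1}(t)=\sup\{x: F_\mu(x)\le t\}$, $t\in]0,1[$; ${\rm supp}\,\mu$ is the support (smallest closed set of full measure). $d_r(\mu,\nu)=\big(\int_0^1|F_\mu^{-1}(t)-F_\nu^{-1}(t)|^r{\rm d}t\big)^{1/r}$ on $\mathcal P_r$. $\Xi_n=\{\mathbf x\in\mathbb R^n:x_1\le\dots\le x_n\}$, $\Pi_n=\{\mathbf p\in\mathbb R^n:p_i\ge0,\sum_ip_i=1\}$, $\delta^{\mathbf p}_{\mathbf x}=\sum_{i=1}^np_i\delta_{x_i}$; the minimum over $\Pi_n$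 is attained. *)

From Stdlib Require Import Reals Lra List ClassicalEpsilon.
Open Scope R_scope.

(* A Borel probability measure on R is represented by its distribution function F = F_mu. *)
Definition is_cdf (F : R -> R) : Prop :=
  (forall x y, x <= y -> F x <= F y) /\
  (forall x eps, 0 < eps -> exists delta, 0 < delta /\
       forall y, x <= y < x + delta -> F y - F x < eps) /\
  (forall eps, 0 < eps -> exists M, forall x, x <= M -> Rabs (F x) < eps) /\
  (forall eps, 0 < eps -> exists M, forall x, M <= x -> Rabs (F x - 1) < eps).

(* F^{-1}(t) = sup {x : F x <= t}  (meaningful for t in ]0,1[) *)
Definition quantile (F : R -> R) (t : R) : R :=
  epsilon (inhabits 0) (fun m => is_lub (fun y => F y <= t) m).

Definition rpow (x y : R) : R := if Rle_dec x 0 then 0 else Rpower x y.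

(* I is the (possibly improper) integral over ]0,1[ of the nonnegative function g:
   g is Riemann integrable on every [a,b] ⊂ ]0,1[ and I is the supremum of these integrals *)
Definition Int01 (g : R -> R) (I : R) : Prop :=
  (forall a b, 0 < a -> a <= b -> b < 1 ->
     exists pr : Riemann_integrable g a b, RiemannInt pr <= I) /\
  (forall eps, 0 < eps -> exists a b, 0 < a /\ a <= b /\ b < 1 /\
     exists pr : Riemann_integrable g a b, I - eps < RiemannInt pr).

(* mu in P_r : int |x|^r dmu = int_0^1 |F^{-1}(t)|^r dt < infinity *)
Definition in_Pr (r : R) (F : R -> R) : Prop :=
  is_cdf F /\ exists I, Int01 (fun t => rpow (Rabs (quantile F t)) r) I.

Definition dr (r : R) (F G : R -> R) (d : R) : Prop :=
  exists I, Int01 (fun t => rpow (Rabs (quantile F t - quantile G t)) r) I /\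
            d = rpow I (1 / r).

(* supp mu: x such that every open neighbourhood has positive measure *)
Definition in_supp (F : R -> R) (x : R) : Prop :=
  forall eps, 0 < eps -> F (x - eps) < F (x + eps).

Definition fsum (n : nat) (f : nat -> R) : R := fold_right Rplus 0 (map f (seq 0 n)).

(* Xi_n: x_0 <= ... <= x_{n-1}  (0-based indexing) *)
Definition in_Xi (n : nat) (x : nat -> R) : Prop :=
  forall i, (S i < n)%nat -> x i <= x (S i).

Definition in_Pi (n : nat) (p : nat -> R) : Prop :=
  (forall i, (i < n)%nat -> 0 <= p i) /\ fsum n p = 1.

(* distribution function of delta_x^p = sum_i p_i delta_{x_i} *)
Definition dcdf (n : nat) (x p : nat -> R) (y : R) : R :=
  fsum n (fun i => if Rle_dec (x i) y then p i else 0).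

Definition is_min_dist (r : R) (n : nat) (x : nat -> R) (F : R -> R) (m : R) : Prop :=
  (exists p d, in_Pi n p /\ dr r (dcdf n x p) F d /\ m = d) /\
  (forall p d, in_Pi n p -> dr r (dcdf n x p) F d -> m <= d).

(* max_{1<=i<=n-1} (x_{i+1} - x_i), with value 0 for n <= 1 *)
Definition maxgap (n : nat) (x : nat -> R) : R :=
  fold_right Rmax 0 (map (fun i => x (S i) - x i) (seq 0 (n - 1))).

Definition approx_supp (F : R -> R) (x : nat -> nat -> R) : Prop :=
  forall y, in_supp F y ->
    forall eps, 0 < eps -> exists N, forall n, (n >= N)%nat ->
      exists i, (i < n)%nat /\ Rabs (y - x n i) < eps.

(* Necessity: if a support point y stays eps-far from all atoms, the levels t whose
   quantile F^-1(t) lies near y form an interval of positive length on which every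
   discrete quantile is far from F^-1(t), so d_r is bounded below for every choice of
   weights.  Sufficiency: give each atom the F-mass of its Voronoi cell; the discrete
   quantile at t is then the atom nearest to F^-1(t).  On a compact middle range of
   levels this distance is uniformly small, because the atoms approximate the support
   uniformly on compacts, while the two tails are controlled by the integrability of
   |F^-1|^r.  The gap condition gives the approximation of the support directly. *)

From Stdlib Require Import Reals RList Lra Lia List Arith ClassicalEpsilon Classical.
Open Scope R_scope.

Lemma rpow_ge_0 x e : 0 <= rpow x e.
Proof. unfold rpow, Rpower; destruct (Rle_dec x 0); [lra|]. left; apply exp_pos. Qed.

Lemma rpow_gt_0 x e : 0 < x -> 0 < rpow x e.
Proof. intros Hx; unfold rpow, Rpower; destruct (Rle_dec x 0); [lra|]. apply exp_pos. Qed.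

Lemma rpow_0_l e : rpow 0 e = 0.
Proof. unfold rpow; destruct (Rle_dec 0 0); lra. Qed.

Lemma rpow_lt_compat x x' e : 0 < e -> 0 <= x -> x < x' -> rpow x e < rpow x' e.
Proof.
  intros He Hx Hxx'; unfold rpow, Rpower.
  destruct (Rle_dec x' 0); [lra|].
  destruct (Rle_dec x 0); [apply exp_pos|].
  apply exp_increasing, Rmult_lt_compat_l; [exact He|]. apply ln_increasing; lra.
Qed.

Lemma rpow_le_compat x x' e : 0 < e -> 0 <= x -> x <= x' -> rpow x e <= rpow x' e.
Proof.
  intros He Hx [Hlt|<-]; [left; apply rpow_lt_compat; auto | lra].
Qed.

Lemma rpow_mult_distr x y e : 0 <= x -> 0 <= y -> rpow (x * y) e = rpow x e * rpow y e.
Proof.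
  intros [Hx|<-] Hy; [destruct Hy as [Hy|<-]|].
  - unfold rpow. destruct (Rle_dec (x * y) 0); [nra|].
    destruct (Rle_dec x 0); [lra|]. destruct (Rle_dec y 0); [lra|].
    symmetry; apply Rpower_mult_distr; auto.
  - rewrite Rmult_0_r, rpow_0_l; ring.
  - rewrite Rmult_0_l, rpow_0_l; ring.
Qed.

Lemma rpow_rpow_inv x e : 0 < e -> 0 <= x -> rpow (rpow x e) (1 / e) = x.
Proof.
  intros He [Hx|<-]; [|rewrite !rpow_0_l; reflexivity].
  assert (Hxe := rpow_gt_0 x e Hx).
  unfold rpow at 1. destruct (Rle_dec (rpow x e) 0); [lra|].
  unfold rpow. destruct (Rle_dec x 0); [lra|].
  rewrite Rpower_mult. replace (e * (1 / e)) with 1 by (field; lra).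
  apply Rpower_1; exact Hx.
Qed.

Lemma rpow_inv_rpow x e : 0 < e -> 0 <= x -> rpow (rpow x (1 / e)) e = x.
Proof.
  intros He Hx.
  assert (H := rpow_rpow_inv x (1 / e) ltac:(apply Rdiv_lt_0_compat; lra) Hx).
  replace (1 / (1 / e)) with e in H by (field; lra). exact H.
Qed.

Lemma rpow_Rabs_minus_le u v e : 0 < e ->
  rpow (Rabs (u - v)) e <= rpow 2 e * (rpow (Rabs u) e + rpow (Rabs v) e).
Proof.
  intros He.
  set (w := Rmax (Rabs u) (Rabs v)).
  assert (Hu := Rmax_l (Rabs u) (Rabs v)). assert (Hv := Rmax_r (Rabs u) (Rabs v)).
  fold w in Hu, Hv.
  assert (Huv : Rabs (u - v) <= 2 * w).
  { unfold Rminus. eapply Rle_trans; [apply Rabs_triang|]. rewrite Rabs_Ropp. lra. }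
  assert (Hw : 0 <= w) by (eapply Rle_trans; [apply Rabs_pos|exact Hu]).
  eapply Rle_trans; [apply rpow_le_compat; [exact He|apply Rabs_pos|exact Huv]|].
  rewrite rpow_mult_distr by lra.
  apply Rmult_le_compat_l; [apply rpow_ge_0|].
  assert (0 <= rpow (Rabs u) e) by apply rpow_ge_0.
  assert (0 <= rpow (Rabs v) e) by apply rpow_ge_0.
  unfold w, Rmax; destruct Rle_dec; lra.
Qed.

Lemma continuity_rpow_Rabs e : 0 < e -> forall y, continuity_pt (fun z => rpow (Rabs z) e) y.
Proof.
  intros He y. destruct (Req_dec y 0) as [->|Hy].
  - intros eps Heps. exists (rpow eps (1 / e)). split; [apply rpow_gt_0; lra|].
    intros z [_ Hz]. simpl in *. unfold R_dist in *.
    rewrite Rminus_0_r in Hz. rewrite Rabs_R0, rpow_0_l, Rminus_0_r.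
    rewrite Rabs_pos_eq by apply rpow_ge_0.
    rewrite <- (rpow_inv_rpow eps e) by lra.
    apply rpow_lt_compat; [exact He|apply Rabs_pos|exact Hz].
  - assert (Hay : 0 < Rabs y) by (apply Rabs_pos_lt; exact Hy).
    apply continuity_pt_locally_ext with
      (f := comp exp (comp (fun w => e * w) (comp ln Rabs))) (a := Rabs y); [exact Hay| |].
    + intros z Hz. unfold comp, rpow, Rpower. destruct (Rle_dec (Rabs z) 0); [|reflexivity].
      unfold Rdist in Hz. assert (Rabs z = 0) by (assert (0 <= Rabs z) by apply Rabs_pos; lra).
      assert (z = 0) by (apply NNPP; intros Hz0; exact (Rabs_no_R0 z Hz0 H)). subst z.
      rewrite Rminus_0_l, Rabs_Ropp in Hz. lra.
    + apply continuity_pt_comp; [apply continuity_pt_comp; [apply continuity_pt_comp|]|].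
      * apply Rcontinuity_abs.
      * apply derivable_continuous_pt. exists (/ Rabs y). apply derivable_pt_lim_ln; exact Hay.
      * apply continuity_pt_scal with (f := id). apply derivable_continuous_pt, derivable_pt_id.
      * apply derivable_continuous_pt, derivable_pt_exp.
Qed.

Definition is_quantile (G : R -> R) (t q : R) : Prop :=
  (forall y, y < q -> G y <= t) /\ (forall y, q < y -> t < G y).

Lemma quantile_eq G t q : is_quantile G t q -> quantile G t = q.
Proof.
  intros [Hlt Hgt].
  assert (Hlub : is_lub (fun y => G y <= t) q).
  { split.
    - intros y Hy. destruct (Rle_lt_dec y q) as [|Hqy]; [assumption|].
      specialize (Hgt y Hqy). lra.
    - intros u Hu. destruct (Rle_lt_dec q u) as [|Huq]; [assumption|].
      assert ((u + q) / 2 <= u) by (apply Hu, Hlt; lra). lra. }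
  unfold quantile. apply is_lub_u with (fun y => G y <= t); [|exact Hlub].
  apply epsilon_spec. exists q; exact Hlub.
Qed.

Lemma is_quantile_le G t t' q q' :
  t <= t' -> is_quantile G t q -> is_quantile G t' q' -> q <= q'.
Proof.
  intros Ht [Hlt _] [_ Hgt']. destruct (Rle_lt_dec q q') as [|Hq']; [assumption|].
  assert (G ((q + q') / 2) <= t) by (apply Hlt; lra).
  assert (t' < G ((q + q') / 2)) by (apply Hgt'; lra). lra.
Qed.

Section Cdf.

Variable F : R -> R.
Hypothesis HF : is_cdf F.

Lemma cdf_le_compat x y : x <= y -> F x <= F y.
Proof. apply (proj1 HF). Qed.

Lemma cdf_ge_0 x : 0 <= F x.
Proof.
  destruct HF as [_ [_ [Hlim _]]]. destruct (Rle_lt_dec 0 (F x)) as [|Hneg]; [assumption|].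
  destruct (Hlim (- F x)) as [M HM]; [lra|].
  assert (H1 := HM (Rmin M x) (Rmin_l _ _)).
  assert (H2 := cdf_le_compat _ _ (Rmin_r M x)).
  unfold Rabs in H1; destruct Rcase_abs in H1; lra.
Qed.

Lemma cdf_le_1 x : F x <= 1.
Proof.
  destruct HF as [_ [_ [_ Hlim]]]. destruct (Rle_lt_dec (F x) 1) as [|Hbig]; [assumption|].
  destruct (Hlim (F x - 1)) as [M HM]; [lra|].
  assert (H1 := HM (Rmax M x) (Rmax_l _ _)).
  assert (H2 := cdf_le_compat _ _ (Rmax_r M x)).
  unfold Rabs in H1; destruct Rcase_abs in H1; lra.
Qed.

Lemma quantile_is_quantile t : 0 < t < 1 -> is_quantile F t (quantile F t).
Proof.
  intros Ht. destruct HF as [_ [_ [Hlo Hhi]]].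
  set (S := fun y => F y <= t).
  assert (Hne : exists y, S y).
  { destruct (Hlo t) as [M HM]; [lra|]. exists M. unfold S.
    specialize (HM M (Rle_refl _)). unfold Rabs in HM; destruct Rcase_abs in HM; lra. }
  assert (Hbound : bound S).
  { destruct (Hhi (1 - t)) as [M HM]; [lra|]. exists M. intros y Hy. unfold S in Hy.
    destruct (Rle_lt_dec y M) as [|HMy]; [assumption|]. specialize (HM y (Rlt_le _ _ HMy)).
    unfold Rabs in HM; destruct Rcase_abs in HM; lra. }
  destruct (completeness S Hbound Hne) as [q [Hub Hleast]].
  assert (Hq : is_quantile F t q).
  { split.
    - intros y Hy. apply NNPP. intros Hn.
      enough (q <= y) by lra. apply Hleast. intros w Hw. unfold S in Hw.
      destruct (Rle_lt_dec w y) as [|Hyw]; [assumption|].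
      exfalso. apply Hn. assert (F y <= F w) by (apply cdf_le_compat; lra). lra.
    - intros y Hy. destruct (Rle_lt_dec (F y) t) as [Hyt|]; [|assumption].
      specialize (Hub y Hyt). lra. }
  rewrite (quantile_eq _ _ _ Hq). exact Hq.
Qed.

Lemma quantile_ge t z : 0 < t < 1 -> F z <= t -> z <= quantile F t.
Proof.
  intros Ht Hz. destruct (quantile_is_quantile t Ht) as [_ Hgt].
  destruct (Rle_lt_dec z (quantile F t)) as [|Hlt]; [assumption|]. specialize (Hgt z Hlt). lra.
Qed.

Lemma quantile_le t z : 0 < t < 1 -> t < F z -> quantile F t <= z.
Proof.
  intros Ht Hz. destruct (quantile_is_quantile t Ht) as [Hlt _].
  destruct (Rle_lt_dec (quantile F t) z) as [|Hgt]; [assumption|]. specialize (Hlt z Hgt). lra.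
Qed.

Lemma quantile_le_compat t t' : 0 < t < 1 -> 0 < t' < 1 -> t <= t' ->
  quantile F t <= quantile F t'.
Proof. intros; eapply is_quantile_le; eauto; apply quantile_is_quantile; assumption. Qed.

Lemma quantile_in_supp t : 0 < t < 1 -> in_supp F (quantile F t).
Proof.
  intros Ht e He. destruct (quantile_is_quantile t Ht) as [Hlt Hgt].
  assert (F (quantile F t - e) <= t) by (apply Hlt; lra).
  assert (t < F (quantile F t + e)) by (apply Hgt; lra). lra.
Qed.

End Cdf.

Lemma fsum_O f : fsum 0 f = 0.
Proof. reflexivity. Qed.

Lemma fsum_S n f : fsum (S n) f = fsum n f + f n.
Proof.
  unfold fsum. rewrite seq_S, map_app, fold_right_app. simpl.
  induction (map f (seq 0 n)) as [|a l IH]; simpl; [ring|]. rewrite IH. ring.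
Qed.

Lemma fsum_le_compat n f g : (forall i, (i < n)%nat -> f i <= g i) -> fsum n f <= fsum n g.
Proof.
  induction n as [|n IH]; intros H; [rewrite !fsum_O; lra|].
  rewrite !fsum_S. assert (f n <= g n) by (apply H; lia).
  assert (fsum n f <= fsum n g) by (apply IH; intros; apply H; lia). lra.
Qed.

Lemma fsum_ext n f g : (forall i, (i < n)%nat -> f i = g i) -> fsum n f = fsum n g.
Proof.
  induction n as [|n IH]; intros H; [reflexivity|].
  rewrite !fsum_S, (H n) by lia. rewrite IH; [reflexivity|intros; apply H; lia].
Qed.

Lemma fsum_truncate n k f : (k <= n)%nat ->
  fsum n (fun i => if lt_dec i k then f i else 0) = fsum k f.
Proof.
  induction n as [|n IH]; intros Hk; [replace k with 0%nat by lia; reflexivity|].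
  destruct (Nat.eq_dec k (S n)) as [->|Hne].
  - rewrite !fsum_S. destruct (lt_dec n (S n)); [|lia].
    f_equal. apply fsum_ext. intros i Hi. destruct lt_dec; [reflexivity|lia].
  - rewrite fsum_S, IH by lia. destruct lt_dec; [lia|ring].
Qed.

Lemma fsum_plus n f g : fsum n (fun k => f k + g k) = fsum n f + fsum n g.
Proof. induction n as [|n IH]; [rewrite !fsum_O; ring|rewrite !fsum_S, IH; ring]. Qed.

Lemma fsum_scal n c f : fsum n (fun k => c * f k) = c * fsum n f.
Proof. induction n as [|n IH]; [rewrite !fsum_O; ring|rewrite !fsum_S, IH; ring]. Qed.

Lemma fsum_const n c : fsum n (fun _ => c) = INR n * c.
Proof. induction n as [|n IH]; [rewrite fsum_O; simpl; ring|rewrite fsum_S, IH, S_INR; ring]. Qed.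

Lemma fsum_telescope n (g : nat -> R) : fsum n (fun k => g (S k) - g k) = g n - g O.
Proof. induction n as [|n IH]; [rewrite fsum_O; ring|rewrite fsum_S, IH; ring]. Qed.

Lemma in_Xi_le n x : in_Xi n x -> forall i j, (i <= j)%nat -> (j < n)%nat -> x i <= x j.
Proof.
  intros Hx i j Hij Hj. induction j as [|j IH]; [replace i with 0%nat by lia; lra|].
  destruct (Nat.eq_dec i (S j)) as [->|]; [lra|].
  assert (x i <= x j) by (apply IH; lia). assert (x j <= x (S j)) by (apply Hx; lia). lra.
Qed.

Lemma dcdf_is_quantile n x p t k : in_Xi n x -> in_Pi n p -> (k < n)%nat ->
  fsum k p <= t < fsum (S k) p -> is_quantile (dcdf n x p) t (x k).
Proof.
  intros Hx [Hp _] Hk [Hlo Hhi]. split.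
  - intros y Hy. unfold dcdf. rewrite <- (fsum_truncate n k p) in Hlo by lia.
    eapply Rle_trans; [|exact Hlo]. apply fsum_le_compat. intros i Hi.
    destruct (Rle_dec (x i) y); destruct (lt_dec i k); try lra; [|apply Hp; assumption].
    assert (x k <= x i) by (apply (in_Xi_le n); auto; lia). lra.
  - intros y Hy. unfold dcdf. rewrite <- (fsum_truncate n (S k) p) in Hhi by lia.
    eapply Rlt_le_trans; [exact Hhi|]. apply fsum_le_compat. intros i Hi.
    destruct (Rle_dec (x i) y); destruct (lt_dec i (S k)); try lra; [apply Hp; assumption|].
    assert (x i <= x k) by (apply (in_Xi_le n); auto; lia). lra.
Qed.

Lemma fsum_bracket n p t : 0 <= t -> t < fsum n p ->
  exists k, (k < n)%nat /\ fsum k p <= t < fsum (S k) p.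
Proof.
  induction n as [|n IH]; intros H0 H1; [rewrite fsum_O in H1; lra|].
  destruct (Rlt_le_dec t (fsum n p)) as [Hlt|Hge].
  - destruct (IH H0 Hlt) as [k [Hk Hk']]. exists k; split; [lia|exact Hk'].
  - exists n. split; [lia|lra].
Qed.

Lemma dcdf_quantile n x p t : in_Xi n x -> in_Pi n p -> 0 <= t < 1 ->
  exists k, (k < n)%nat /\ fsum k p <= t < fsum (S k) p /\
            is_quantile (dcdf n x p) t (x k) /\ quantile (dcdf n x p) t = x k.
Proof.
  intros Hx Hp Ht. destruct (fsum_bracket n p t) as [k [Hk Hbr]]; [lra|destruct Hp; lra|].
  assert (Hq := dcdf_is_quantile n x p t k Hx Hp Hk Hbr).
  exists k. split; [exact Hk|split; [exact Hbr|split; [exact Hq|apply quantile_eq, Hq]]].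
Qed.

Lemma dcdf_quantile_le_compat n x p s t : in_Xi n x -> in_Pi n p -> 0 <= s -> s <= t -> t < 1 ->
  quantile (dcdf n x p) s <= quantile (dcdf n x p) t.
Proof.
  intros Hx Hp Hs Hst Ht.
  destruct (dcdf_quantile n x p s Hx Hp ltac:(lra)) as [k [_ [_ [Hk Ek]]]].
  destruct (dcdf_quantile n x p t Hx Hp ltac:(lra)) as [l [_ [_ [Hl El]]]].
  rewrite Ek, El. eapply is_quantile_le; eauto.
Qed.

Lemma fold_right_Rmax_ge l a : In a l -> a <= fold_right Rmax 0 l.
Proof.
  induction l as [|b l IH]; simpl; [contradiction|].
  intros [->|Hin]; [apply Rmax_l|]. eapply Rle_trans; [apply IH, Hin|apply Rmax_r].
Qed.

Lemma fold_right_Rmax_ge_0 l : 0 <= fold_right Rmax 0 l.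
Proof. induction l as [|b l IH]; simpl; [lra|]. eapply Rle_trans; [apply IH|apply Rmax_r]. Qed.

Lemma maxgap_ge n x i : (S i < n)%nat -> x (S i) - x i <= maxgap n x.
Proof.
  intros Hi. apply fold_right_Rmax_ge, in_map_iff. exists i. split; [reflexivity|].
  apply in_seq. lia.
Qed.

Lemma maxgap_ge_0 n x : 0 <= maxgap n x.
Proof. apply fold_right_Rmax_ge_0. Qed.

Lemma crossing_index (x : nat -> R) y m : x O <= y -> y < x m ->
  exists i, (i < m)%nat /\ x i <= y < x (S i).
Proof.
  induction m as [|m IH]; intros H0 Hm; [lra|].
  destruct (Rlt_le_dec y (x m)) as [Hlt|Hge].
  - destruct (IH H0 Hlt) as [i [Hi Hi']]. exists i. split; [lia|exact Hi'].
  - exists m. split; [lia|lra].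
Qed.

(* As y is in the support, F (y + e) > 0 and F (y - e) < 1: small tails force
   x_0 < y + e and y - e < x_(n-1), and in between a small largest gap leaves an atom near y. *)
Lemma approx_supp_of_gaps_cv F (x : nat -> nat -> R) : is_cdf F ->
  Un_cv (fun n => F (x n O) + maxgap n (x n) + 1 - F (x n (Nat.pred n))) 0 ->
  approx_supp F x.
Proof.
  intros HF Hcv y Hy eps Heps.
  set (e := eps / 2). assert (He : 0 < e) by (unfold e; lra).
  assert (Hs := Hy e He).
  assert (H0 := cdf_ge_0 F HF (y - e)). assert (H1 := cdf_le_1 F HF (y + e)).
  set (del := Rmin (F (y + e)) (Rmin (1 - F (y - e)) e)).
  assert (Hdel : 0 < del) by (unfold del; repeat apply Rmin_pos; lra).
  assert (D1 := Rmin_l (F (y + e)) (Rmin (1 - F (y - e)) e)).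
  assert (D2 := Rmin_r (F (y + e)) (Rmin (1 - F (y - e)) e)).
  assert (D3 := Rmin_l (1 - F (y - e)) e). assert (D4 := Rmin_r (1 - F (y - e)) e).
  fold del in D1, D2.
  destruct (Hcv del Hdel) as [N HN]. exists (max N 1). intros n Hn.
  specialize (HN n ltac:(lia)). unfold R_dist in HN. rewrite Rminus_0_r in HN.
  assert (A0 := cdf_ge_0 F HF (x n O)). assert (A1 := cdf_le_1 F HF (x n (pred n))).
  assert (A2 := maxgap_ge_0 n (x n)).
  rewrite Rabs_pos_eq in HN by lra.
  assert (Hfirst : x n O < y + e).
  { destruct (Rlt_le_dec (x n O) (y + e)) as [|Hge]; [assumption|].
    apply (cdf_le_compat F HF) in Hge. lra. }
  assert (Hlast : y - e < x n (pred n)).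
  { destruct (Rlt_le_dec (y - e) (x n (pred n))) as [|Hge]; [assumption|].
    apply (cdf_le_compat F HF) in Hge. lra. }
  assert (Hgap : maxgap n (x n) < e) by lra.
  destruct (Rlt_le_dec y (x n O)) as [Hy0|Hy0].
  - exists O. split; [lia|]. rewrite Rabs_left1 by lra. unfold e in *; lra.
  - destruct (Rle_lt_dec (x n (pred n)) y) as [Hyn|Hyn].
    + exists (pred n). split; [lia|]. rewrite Rabs_pos_eq by lra. unfold e in *; lra.
    + destruct (crossing_index (x n) y (pred n) Hy0 Hyn) as [i [Hi Hi']].
      exists i. split; [lia|]. assert (G := maxgap_ge n (x n) i ltac:(lia)).
      rewrite Rabs_pos_eq by lra. unfold e in *; lra.
Qed.

(* Levels t in the middle half of ]F (y - eps/2), F (y + eps/2)[ have their quantile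
   within eps/2 of y, so if no atom is eps-close to y the cost is at least
   (b - a) (eps/2)^r whatever the weights. *)
Lemma approx_supp_of_min_dist_cv r F (x : nat -> nat -> R) (m : nat -> R) :
  0 < r -> is_cdf F ->
  (forall n, (1 <= n)%nat -> in_Xi n (x n)) ->
  (forall n, (1 <= n)%nat -> is_min_dist r n (x n) F (m n)) ->
  Un_cv m 0 -> approx_supp F x.
Proof.
  intros Hr HF HX Hmin Hcv y Hy eps Heps.
  set (e := eps / 2). assert (He : 0 < e) by (unfold e; lra).
  assert (Hs := Hy e He).
  set (a := F (y - e) + (F (y + e) - F (y - e)) / 4).
  set (b := F (y + e) - (F (y + e) - F (y - e)) / 4).
  assert (Hab : 0 < a < b /\ b < 1).
  { assert (0 <= F (y - e)) by apply (cdf_ge_0 F HF).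
    assert (F (y + e) <= 1) by apply (cdf_le_1 F HF). unfold a, b; lra. }
  set (c := (b - a) * rpow e r).
  assert (Hc : 0 < c) by (apply Rmult_lt_0_compat; [lra|apply rpow_gt_0, He]).
  set (del := rpow c (1 / r)).
  assert (Hdel : 0 < del) by (apply rpow_gt_0, Hc).
  destruct (Hcv del Hdel) as [N HN]. exists (max N 1). intros n Hn.
  specialize (HN n ltac:(lia)). unfold R_dist in HN. rewrite Rminus_0_r in HN.
  apply NNPP. intros Hno.
  assert (Hfar : forall i, (i < n)%nat -> eps <= Rabs (y - x n i)).
  { intros i Hi. destruct (Rle_lt_dec eps (Rabs (y - x n i))) as [|Hlt]; [assumption|].
    exfalso; apply Hno; exists i; split; assumption. }
  destruct (Hmin n ltac:(lia)) as [[p [d [Hp [[I [[HI _] Hd]] Hmd]]]] _].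
  destruct (HI a b) as [pr Hpr]; [lra|lra|lra|].
  assert (Hlow : c <= RiemannInt pr).
  { unfold c. rewrite Rmult_comm, <- (RiemannInt_P15 (RiemannInt_P14 a b (rpow e r))).
    apply RiemannInt_P19; [lra|]. intros t [Ht1 Ht2]. unfold fct_cte.
    assert (Ht : 0 < t < 1) by lra.
    assert (Q1 : y - e <= quantile F t) by (apply quantile_ge; auto; unfold a, b in *; lra).
    assert (Q2 : quantile F t <= y + e) by (apply quantile_le; auto; unfold a, b in *; lra).
    destruct (dcdf_quantile n (x n) p t (HX n ltac:(lia)) Hp ltac:(lra))
      as [k [Hk [_ [_ ->]]]].
    apply rpow_le_compat; [lra|lra|].
    specialize (Hfar k Hk). unfold e in *.
    unfold Rabs in *; repeat destruct Rcase_abs; lra. }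
  assert (del <= d) by (rewrite Hd; apply rpow_le_compat; [apply Rdiv_lt_0_compat|..]; lra).
  assert (0 <= m n) by (rewrite Hmd, Hd; apply rpow_ge_0).
  rewrite Rabs_pos_eq in HN by assumption. lra.
Qed.

Lemma exists_nat_gt A : exists n : nat, A < INR n.
Proof.
  destruct (archimed_cor1 (/ (Rabs A + 1))) as [N [HN HN0]].
  { apply Rinv_0_lt_compat. assert (0 <= Rabs A) by apply Rabs_pos. lra. }
  exists N. assert (HA := Rle_abs A). assert (0 < INR N) by (apply lt_0_INR; exact HN0).
  destruct (Rlt_le_dec (Rabs A + 1) (INR N)) as [|Hle]; [lra|].
  apply Rinv_le_contravar in Hle; [lra|assumption].
Qed.

Lemma exists_small_pos C T : 0 <= C -> 0 < T -> exists tau, (0 < tau <= 1/2) /\ C * tau <= T.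
Proof.
  intros HC HT. exists (Rmin (1/2) (T / (C + 1))).
  assert (Hpos : 0 < T / (C + 1)) by (apply Rdiv_lt_0_compat; lra).
  assert (Hmin := Rmin_r (1/2) (T / (C + 1))).
  split; [split; [apply Rmin_pos; lra|apply Rmin_l]|].
  apply Rle_trans with ((C + 1) * (T / (C + 1))); [|right; field; lra].
  apply Rmult_le_compat; [lra|left; apply Rmin_pos; lra|lra|exact Hmin].
Qed.

Lemma IsStepFun_ext f g a b : IsStepFun f a b ->
  (forall t, Rmin a b < t < Rmax a b -> f t = g t) -> IsStepFun g a b.
Proof.
  intros [l [lf [H1 [H2 [H3 [H4 H5]]]]]] Hfg.
  exists l, lf. repeat split; auto.
  intros i Hi t Ht. unfold open_interval in Ht.
  rewrite <- (H5 i Hi t Ht). symmetry. apply Hfg.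
  assert (Hsorted := proj1 (RList_P6 l) H1).
  assert (pos_Rl l 0 <= pos_Rl l i) by (apply Hsorted; lia).
  assert (pos_Rl l (S i) <= pos_Rl l (pred (length l))) by (apply Hsorted; lia).
  lra.
Qed.

Lemma RiemannInt_SF_ext a b (p q : StepFun a b) : a <= b ->
  (forall t, a < t < b -> p t = q t) -> RiemannInt_SF p = RiemannInt_SF q.
Proof.
  intros Hab H. apply Rle_antisym; apply StepFun_P37; auto; intros t Ht; rewrite H; auto; lra.
Qed.

Definition step_approx (f : R -> R) (a b e : R) : Prop :=
  exists (phi psi : StepFun a b),
    (forall t, a <= t <= b -> Rabs (f t - phi t) <= psi t) /\ RiemannInt_SF psi <= e.

Lemma step_approx_chasles f a b c e1 e2 : a <= b -> b <= c ->
  step_approx f a b e1 -> step_approx f b c e2 -> step_approx f a c (e1 + e2).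
Proof.
  intros Hab Hbc [p1 [s1 [Hp1 Hs1]]] [p2 [s2 [Hp2 Hs2]]].
  set (glue := fun g1 g2 : R -> R => fun t => if Rle_dec t b then g1 t else g2 t).
  assert (HL : forall g1 g2 : R -> R, IsStepFun g1 a b -> IsStepFun (glue g1 g2) a b).
  { intros g1 g2 Hg. apply IsStepFun_ext with (f := g1); [exact Hg|].
    intros t Ht. rewrite Rmin_left, Rmax_right in Ht by assumption. unfold glue.
    destruct Rle_dec; [reflexivity|lra]. }
  assert (HR : forall g1 g2 : R -> R, IsStepFun g2 b c -> IsStepFun (glue g1 g2) b c).
  { intros g1 g2 Hg. apply IsStepFun_ext with (f := g2); [exact Hg|].
    intros t Ht. rewrite Rmin_left, Rmax_right in Ht by assumption. unfold glue.
    destruct Rle_dec; [lra|reflexivity]. }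
  set (SA := HL s1 s2 (pre s1)). set (SB := HR s1 s2 (pre s2)).
  exists (mkStepFun (StepFun_P46 (HL p1 p2 (pre p1)) (HR p1 p2 (pre p2)))),
         (mkStepFun (StepFun_P46 SA SB)).
  split.
  - intros t Ht. simpl. unfold glue. destruct Rle_dec; [apply Hp1|apply Hp2]; lra.
  - rewrite <- (StepFun_P43 SA SB).
    assert (E1 : RiemannInt_SF (mkStepFun SA) = RiemannInt_SF s1).
    { apply RiemannInt_SF_ext; [assumption|]. intros t Ht. simpl. unfold glue.
      destruct Rle_dec; [reflexivity|lra]. }
    assert (E2 : RiemannInt_SF (mkStepFun SB) = RiemannInt_SF s2).
    { apply RiemannInt_SF_ext; [assumption|]. intros t Ht. simpl. unfold glue.
      destruct Rle_dec; [lra|reflexivity]. }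
    rewrite E1, E2. lra.
Qed.

Lemma step_approx_cell f s e w : s <= e -> (forall t, s <= t <= e -> Rabs (f t - f s) <= w) ->
  step_approx f s e (w * (e - s)).
Proof.
  intros Hse H.
  exists (mkStepFun (StepFun_P4 s e (f s))), (mkStepFun (StepFun_P4 s e w)). split.
  - intros t Ht. simpl. unfold fct_cte. apply H, Ht.
  - rewrite StepFun_P18. lra.
Qed.

Lemma step_approx_grid f a h N (W : nat -> R) : 0 <= h ->
  (forall k, (k < N)%nat -> forall t, a + INR k * h <= t <= a + INR (S k) * h ->
     Rabs (f t - f (a + INR k * h)) <= W k) ->
  step_approx f a (a + INR N * h) (h * fsum N W).
Proof.
  intros Hh. induction N as [|N IH]; intros H.
  - rewrite fsum_O. simpl. replace (a + 0 * h) with a by ring.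
    replace (h * 0) with (0 * (a - a)) by ring.
    apply step_approx_cell; [lra|]. intros t Ht. replace t with a by lra.
    rewrite Rminus_diag, Rabs_R0. lra.
  - rewrite fsum_S, Rmult_plus_distr_l.
    apply step_approx_chasles with (a + INR N * h).
    + assert (0 <= INR N) by apply pos_INR. nra.
    + rewrite S_INR. lra.
    + apply IH. intros k Hk. apply H. lia.
    + replace (h * W N) with (W N * (a + INR (S N) * h - (a + INR N * h))) by (rewrite S_INR; ring).
      apply step_approx_cell; [rewrite S_INR; lra|]. apply H. lia.
Qed.

Lemma Riemann_integrable_of_step_approx f a b : a <= b ->
  (forall eps, 0 < eps -> exists e, e < eps /\ step_approx f a b e) ->
  Riemann_integrable f a b.
Proof.
  intros Hab H eps.
  destruct (constructive_indefinite_description _ (H eps (cond_pos eps))) as [e [He Happ]].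
  destruct (constructive_indefinite_description _ Happ) as [phi Happ'].
  destruct (constructive_indefinite_description _ Happ') as [psi [H1 H2]].
  exists phi, psi. rewrite Rmin_left, Rmax_right by assumption. split; [exact H1|].
  assert (0 <= RiemannInt_SF psi).
  { replace 0 with (RiemannInt_SF (mkStepFun (StepFun_P4 a b 0))).
    - apply StepFun_P37; [assumption|]. intros t Ht. simpl. unfold fct_cte.
      eapply Rle_trans; [apply Rabs_pos|apply H1; lra].
    - rewrite StepFun_P18. ring. }
  rewrite Rabs_pos_eq; [lra|assumption].
Qed.

(* Uniform continuity handles close points; for points at distance at least the modulus
   [eta], the bound [2 max |phi|] is absorbed by [K |w - w'|] with [K = 2 max |phi| / eta]. *)
Lemma continuous_oscillation_le (phi : R -> R) A B e : A <= B -> 0 < e ->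
  (forall y, continuity_pt phi y) ->
  exists K, 0 <= K /\ forall w w', A <= w <= B -> A <= w' <= B ->
    Rabs (phi w - phi w') <= e + K * Rabs (w - w').
Proof.
  intros HAB He Hphi.
  destruct (continuity_ab_maj (fun y => Rabs (phi y)) A B HAB) as [wmax [Hmax _]].
  { intros c _. apply continuity_pt_comp with (f2 := Rabs); [apply Hphi|apply Rcontinuity_abs]. }
  set (M := Rabs (phi wmax)). assert (HM : 0 <= M) by apply Rabs_pos.
  destruct (Heine_cor2 (f := phi) (a := A) (b := B) (fun y _ => Hphi y) (mkposreal e He))
    as [eta Heta]. simpl in Heta. assert (Heta0 := cond_pos eta).
  exists (2 * M / eta). split; [apply Rmult_le_pos; [lra|left; apply Rinv_0_lt_compat, Heta0]|].
  intros w w' Hw Hw'.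
  assert (0 <= 2 * M / eta * Rabs (w - w')).
  { apply Rmult_le_pos; [apply Rmult_le_pos; [lra|left; apply Rinv_0_lt_compat, Heta0]|apply Rabs_pos]. }
  destruct (Rlt_le_dec (Rabs (w - w')) eta) as [Hnear|Hfar].
  - assert (Rabs (phi w - phi w') < e) by (apply Heta; assumption). lra.
  - assert (Rabs (phi w) <= M) by (apply Hmax; assumption).
    assert (Rabs (phi w') <= M) by (apply Hmax; assumption).
    assert (Rabs (phi w - phi w') <= 2 * M).
    { unfold Rminus. eapply Rle_trans; [apply Rabs_triang|]. rewrite Rabs_Ropp. lra. }
    assert (2 * M <= 2 * M / eta * Rabs (w - w')).
    { apply Rle_trans with (2 * M / eta * eta); [right; field; lra|].
      apply Rmult_le_compat_l; [|exact Hfar].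
      apply Rmult_le_pos; [lra|left; apply Rinv_0_lt_compat, Heta0]. }
    lra.
Qed.

Section MonotoneDifference.

Variables (phi u v : R -> R) (a b : R).
Hypotheses (Hab : a <= b)
  (Hu : forall s t, a <= s -> s <= t -> t <= b -> u s <= u t)
  (Hv : forall s t, a <= s -> s <= t -> t <= b -> v s <= v t).

Lemma sub_monotone_range t : a <= t <= b -> u a - v b <= u t - v t <= u b - v a.
Proof.
  intros Ht. assert (u a <= u t) by (apply Hu; lra). assert (u t <= u b) by (apply Hu; lra).
  assert (v a <= v t) by (apply Hv; lra). assert (v t <= v b) by (apply Hv; lra). lra.
Qed.

(* On a grid of mesh [h] the oscillation of [u - v] over the cells adds up to the
   total variation [(u b - u a) + (v b - v a)]. *)
Lemma step_approx_comp_sub_monotone e K N : 0 <= K -> (0 < N)%nat ->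
  (forall w w', u a - v b <= w <= u b - v a -> u a - v b <= w' <= u b - v a ->
     Rabs (phi w - phi w') <= e + K * Rabs (w - w')) ->
  step_approx (fun t => phi (u t - v t)) a b
    ((b - a) * e + (b - a) / INR N * K * ((u b - u a) + (v b - v a))).
Proof.
  intros HK HN Hosc.
  assert (HN0 : 0 < INR N) by (apply lt_0_INR, HN).
  set (h := (b - a) / INR N).
  assert (Hh : 0 <= h) by (unfold h, Rdiv; apply Rmult_le_pos; [lra|left; apply Rinv_0_lt_compat, HN0]).
  assert (HNh : a + INR N * h = b) by (unfold h; field; lra).
  set (s := fun k : nat => a + INR k * h).
  set (V := fun k => (u (s (S k)) - u (s k)) + (v (s (S k)) - v (s k))).
  assert (Htel : fsum N V = (u b - u a) + (v b - v a)).
  { rewrite (fsum_ext N V (fun k => (u (s (S k)) + v (s (S k))) - (u (s k) + v (s k))))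
      by (intros; unfold V; ring).
    rewrite (fsum_telescope N (fun k => u (s k) + v (s k))).
    unfold s. rewrite HNh. simpl. replace (a + 0 * h) with a by ring. ring. }
  replace ((b - a) * e + h * K * ((u b - u a) + (v b - v a)))
    with (h * fsum N (fun k => e + K * V k))
    by (rewrite fsum_plus, fsum_const, fsum_scal, Htel; unfold h; field; lra).
  rewrite <- HNh. apply step_approx_grid; [exact Hh|].
  intros k Hk t Ht. fold (s k) (s (S k)) in Ht |- *.
  assert (Hsk : a <= s k) by (unfold s; assert (0 <= INR k) by apply pos_INR; nra).
  assert (HsSk : s (S k) <= b).
  { rewrite <- HNh. unfold s. assert (INR (S k) <= INR N) by (apply le_INR; lia). nra. }
  assert (u (s k) <= u t) by (apply Hu; lra). assert (u t <= u (s (S k))) by (apply Hu; lra).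
  assert (v (s k) <= v t) by (apply Hv; lra). assert (v t <= v (s (S k))) by (apply Hv; lra).
  eapply Rle_trans; [apply Hosc; apply sub_monotone_range; lra|].
  apply Rplus_le_compat_l, Rmult_le_compat_l; [exact HK|].
  unfold V, Rabs; destruct Rcase_abs; lra.
Qed.

Lemma Riemann_integrable_comp_sub_monotone : (forall y, continuity_pt phi y) ->
  Riemann_integrable (fun t => phi (u t - v t)) a b.
Proof.
  intros Hphi.
  apply Riemann_integrable_of_step_approx; [exact Hab|]. intros eps Heps.
  set (e := eps / (4 * (b - a + 1))).
  assert (He : 0 < e) by (apply Rdiv_lt_0_compat; lra).
  destruct (continuous_oscillation_le phi (u a - v b) (u b - v a) e) as [K [HK Hosc]];
    [assert (Hr := sub_monotone_range a); lra|exact He|exact Hphi|].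
  set (TV := (u b - u a) + (v b - v a)).
  assert (HTV : 0 <= TV) by (assert (Hr := sub_monotone_range b); unfold TV; lra).
  set (X := (b - a) * K * TV).
  assert (HX : 0 <= X) by (apply Rmult_le_pos; [apply Rmult_le_pos|]; lra).
  destruct (exists_nat_gt (4 * X / eps)) as [N HXN].
  assert (HN0 : 0 < INR N)
    by (assert (0 <= 4 * X / eps) by (unfold Rdiv; apply Rmult_le_pos; [lra|left; apply Rinv_0_lt_compat; lra]); lra).
  exists ((b - a) * e + (b - a) / INR N * K * TV). split.
  - assert ((b - a) * e < eps / 4).
    { unfold e. apply Rmult_lt_reg_r with (4 * (b - a + 1)); [lra|].
      replace ((b - a) * (eps / (4 * (b - a + 1))) * (4 * (b - a + 1))) with ((b - a) * eps)
        by (field; lra). nra. }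
    assert ((b - a) / INR N * K * TV < eps / 4).
    { replace ((b - a) / INR N * K * TV) with (X / INR N) by (unfold X; field; lra).
      apply Rmult_lt_reg_r with (INR N * (4 / eps));
        [apply Rmult_lt_0_compat; [lra|apply Rdiv_lt_0_compat; lra]|].
      replace (X / INR N * (INR N * (4 / eps))) with (4 * X / eps) by (field; lra).
      replace (eps / 4 * (INR N * (4 / eps))) with (INR N) by (field; lra). exact HXN. }
    lra.
  - apply step_approx_comp_sub_monotone; [exact HK| |exact Hosc].
    apply INR_lt. simpl. exact HN0.
Qed.

End MonotoneDifference.

(* The weight of [x i] is the [F]-mass of its Voronoi cell
   ](x (i-1) + x i) / 2, (x i + x (i+1)) / 2], so that the discrete quantile at [t]
   is a point of [x] nearest to [quantile F t]. *)
Definition nearest_cut (F : R -> R) (n : nat) (x : nat -> R) (i : nat) : R :=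
  if lt_dec (S i) n then F ((x i + x (S i)) / 2) else 1.

Definition nearest_weights (F : R -> R) (n : nat) (x : nat -> R) (i : nat) : R :=
  match i with O => nearest_cut F n x O | S j => nearest_cut F n x (S j) - nearest_cut F n x j end.

Section NearestWeights.

Variables (F : R -> R) (n : nat) (x : nat -> R).
Hypotheses (HF : is_cdf F) (Hn : (1 <= n)%nat) (Hx : in_Xi n x).

Lemma fsum_nearest_weights k : fsum (S k) (nearest_weights F n x) = nearest_cut F n x k.
Proof.
  induction k as [|k IH]; [rewrite fsum_S, fsum_O; simpl; ring|].
  rewrite fsum_S, IH. simpl. ring.
Qed.

Lemma nearest_weights_in_Pi : in_Pi n (nearest_weights F n x).
Proof.
  split.
  - intros [|i] Hi; simpl; unfold nearest_cut.
    + destruct lt_dec; [apply cdf_ge_0, HF|lra].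
    + assert (F ((x i + x (S i)) / 2) <= 1) by apply (cdf_le_1 F HF).
      destruct (lt_dec (S (S i)) n); destruct (lt_dec (S i) n); try lia; try lra.
      assert (x i <= x (S i)) by (apply Hx; lia).
      assert (x (S i) <= x (S (S i))) by (apply Hx; lia).
      assert (F ((x i + x (S i)) / 2) <= F ((x (S i) + x (S (S i))) / 2))
        by (apply (cdf_le_compat F HF); lra). lra.
  - assert (En : n = S (pred n)) by lia. rewrite En at 1.
    rewrite fsum_nearest_weights. unfold nearest_cut.
    destruct lt_dec; [lia|reflexivity].
Qed.

Lemma nearest_weights_nearest t k : 0 < t < 1 -> (k < n)%nat ->
  fsum k (nearest_weights F n x) <= t < fsum (S k) (nearest_weights F n x) ->
  forall j, (j < n)%nat -> Rabs (quantile F t - x k) <= Rabs (quantile F t - x j).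
Proof.
  intros Ht Hk [Hlo Hhi] j Hj.
  set (q := quantile F t).
  rewrite fsum_nearest_weights in Hhi.
  assert (Hup : (S k < n)%nat -> q <= (x k + x (S k)) / 2).
  { intros HSk. unfold nearest_cut in Hhi. destruct lt_dec; [|lia]. apply quantile_le; assumption. }
  assert (Hdown : (0 < k)%nat -> (x (pred k) + x k) / 2 <= q).
  { intros Hk0. destruct k as [|k']; [lia|]. rewrite fsum_nearest_weights in Hlo.
    unfold nearest_cut in Hlo. destruct lt_dec; [|lia]. apply quantile_ge; assumption. }
  destruct (lt_eq_lt_dec j k) as [[Hjk| ->]|Hjk].
  - specialize (Hdown ltac:(lia)).
    assert (x j <= x (pred k)) by (apply (in_Xi_le n); auto; lia).
    assert (x (pred k) <= x k) by (apply (in_Xi_le n); auto; lia).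
    unfold Rabs; repeat destruct Rcase_abs; lra.
  - lra.
  - specialize (Hup ltac:(lia)).
    assert (x (S k) <= x j) by (apply (in_Xi_le n); auto; lia).
    assert (x k <= x (S k)) by (apply (in_Xi_le n); auto; lia).
    unfold Rabs; repeat destruct Rcase_abs; lra.
Qed.

Lemma quantile_nearest_weights_le t j : 0 < t < 1 -> (j < n)%nat ->
  Rabs (quantile (dcdf n x (nearest_weights F n x)) t - quantile F t) <= Rabs (quantile F t - x j).
Proof.
  intros Ht Hj.
  destruct (dcdf_quantile n x (nearest_weights F n x) t Hx nearest_weights_in_Pi ltac:(lra))
    as [k [Hk [Hbr [_ ->]]]].
  rewrite <- Rabs_Ropp. replace (- (x k - quantile F t)) with (quantile F t - x k) by ring.
  apply (nearest_weights_nearest t k); assumption.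
Qed.

Definition nearest_cost (r t : R) : R :=
  rpow (Rabs (quantile (dcdf n x (nearest_weights F n x)) t - quantile F t)) r.

Lemma nearest_cost_integrable r a b : 0 < r -> 0 < a -> a <= b -> b < 1 ->
  Riemann_integrable (nearest_cost r) a b.
Proof.
  intros Hr Ha Hab Hb.
  apply (Riemann_integrable_comp_sub_monotone (fun z => rpow (Rabs z) r)
           (quantile (dcdf n x (nearest_weights F n x))) (quantile F)).
  - exact Hab.
  - intros s t Hs Hst Ht. apply dcdf_quantile_le_compat; [exact Hx|apply nearest_weights_in_Pi|lra..].
  - intros s t Hs Hst Ht. apply quantile_le_compat; [exact HF|lra..].
  - apply continuity_rpow_Rabs, Hr.
Qed.

Lemma nearest_cost_le r t j : 0 < r -> 0 < t < 1 -> (j < n)%nat ->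
  nearest_cost r t <= rpow (Rabs (quantile F t - x j)) r.
Proof.
  intros Hr Ht Hj. apply rpow_le_compat; [exact Hr|apply Rabs_pos|].
  apply quantile_nearest_weights_le; assumption.
Qed.

Lemma nearest_cost_le_affine r t j L : 0 < r -> 0 < t < 1 -> (j < n)%nat -> Rabs (x j) <= L ->
  nearest_cost r t <= rpow 2 r * (rpow (Rabs (quantile F t)) r + rpow L r).
Proof.
  intros Hr Ht Hj HL.
  eapply Rle_trans; [apply nearest_cost_le with (j := j); assumption|].
  eapply Rle_trans; [apply rpow_Rabs_minus_le, Hr|].
  apply Rmult_le_compat_l; [apply rpow_ge_0|]. apply Rplus_le_compat_l.
  apply rpow_le_compat; [exact Hr|apply Rabs_pos|exact HL].
Qed.

End NearestWeights.

Lemma RiemannInt_le_const f a b M (pr : Riemann_integrable f a b) : a <= b ->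
  (forall t, a < t < b -> f t <= M) -> RiemannInt pr <= M * (b - a).
Proof.
  intros Hab H. rewrite <- (RiemannInt_P15 (RiemannInt_P14 a b M)).
  apply RiemannInt_P19; assumption.
Qed.

Lemma RiemannInt_ge_0 f a b (pr : Riemann_integrable f a b) : a <= b ->
  (forall t, a < t < b -> 0 <= f t) -> 0 <= RiemannInt pr.
Proof.
  intros Hab H. replace 0 with (0 * (b - a)) by ring.
  rewrite <- (RiemannInt_P15 (RiemannInt_P14 a b 0)).
  apply RiemannInt_P19; assumption.
Qed.

Lemma RiemannInt_le_affine f g a b C K (prf : Riemann_integrable f a b)
  (prg : Riemann_integrable g a b) : a <= b ->
  (forall t, a < t < b -> f t <= C * (g t + K)) ->
  RiemannInt prf <= C * (RiemannInt prg + K * (b - a)).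
Proof.
  intros Hab H.
  set (p1 := RiemannInt_P14 a b 1).
  set (pgK := RiemannInt_P10 K prg p1).
  set (p0 := RiemannInt_P14 a b 0).
  set (pC := RiemannInt_P10 C p0 pgK).
  assert (E := RiemannInt_P13 p0 pgK pC).
  assert (E' := RiemannInt_P13 prg p1 pgK).
  rewrite (RiemannInt_P15 p0) in E. rewrite (RiemannInt_P15 p1) in E'.
  assert (RiemannInt prf <= RiemannInt pC).
  { apply RiemannInt_P19; [assumption|]. intros t Ht. unfold fct_cte. specialize (H t Ht). lra. }
  rewrite E' in E. lra.
Qed.

Lemma RiemannInt_split3 f a b c d (pr : Riemann_integrable f a d) : a <= b -> b <= c -> c <= d ->
  exists (p1 : Riemann_integrable f a b) (p2 : Riemann_integrable f b c)
         (p3 : Riemann_integrable f c d),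
    RiemannInt pr = RiemannInt p1 + RiemannInt p2 + RiemannInt p3.
Proof.
  intros H1 H2 H3.
  set (q1 := RiemannInt_P22 pr (conj H1 (Rle_trans _ _ _ H2 H3))).
  set (q2 := RiemannInt_P23 pr (conj H1 (Rle_trans _ _ _ H2 H3))).
  set (q3 := RiemannInt_P22 q2 (conj H2 H3)). set (q4 := RiemannInt_P23 q2 (conj H2 H3)).
  exists q1, q3, q4.
  rewrite <- (RiemannInt_P26 q1 q2 pr), <- (RiemannInt_P26 q3 q4 q2). ring.
Qed.

Lemma RiemannInt_le_subinterval f a' a b b' (pr : Riemann_integrable f a b)
  (pr' : Riemann_integrable f a' b') : a' <= a -> a <= b -> b <= b' ->
  (forall t, a' < t < b' -> 0 <= f t) -> RiemannInt pr <= RiemannInt pr'.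
Proof.
  intros H1 H2 H3 H.
  destruct (RiemannInt_split3 f a' a b b' pr' H1 H2 H3) as [p1 [p2 [p3 E]]].
  rewrite (RiemannInt_P5 pr p2), E.
  assert (0 <= RiemannInt p1) by (apply RiemannInt_ge_0; [|intros; apply H]; lra).
  assert (0 <= RiemannInt p3) by (apply RiemannInt_ge_0; [|intros; apply H]; lra).
  lra.
Qed.

Lemma Int01_tails_le g I : Int01 g I -> (forall t, 0 < t < 1 -> 0 <= g t) ->
  forall del, 0 < del -> exists al be, 0 < al <= be /\ be < 1 /\
    forall c d (pr : Riemann_integrable g c d), 0 < c -> c <= d -> d < 1 ->
      d <= al \/ be <= c -> RiemannInt pr <= del.
Proof.
  intros [Hle Happrox] Hg del Hdel.
  destruct (Happrox del Hdel) as [al [be [Hal [Hab [Hbe [pr0 Hpr0]]]]]].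
  exists al, be. split; [lra|split; [assumption|]].
  intros c d pr Hc Hcd Hd [Hleft|Hright].
  - destruct (Hle c be) as [prb Hprb]; [lra..|].
    destruct (RiemannInt_split3 g c d al be prb Hcd Hleft Hab) as [p1 [p2 [p3 E]]].
    rewrite (RiemannInt_P5 p1 pr), (RiemannInt_P5 p3 pr0) in E.
    assert (0 <= RiemannInt p2) by (apply RiemannInt_ge_0; [|intros; apply Hg]; lra).
    lra.
  - destruct (Hle al d) as [prb Hprb]; [lra..|].
    destruct (RiemannInt_split3 g al be c d prb Hab Hright Hcd) as [p1 [p2 [p3 E]]].
    rewrite (RiemannInt_P5 p1 pr0), (RiemannInt_P5 p3 pr) in E.
    assert (0 <= RiemannInt p2) by (apply RiemannInt_ge_0; [|intros; apply Hg]; lra).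
    lra.
Qed.

Lemma Int01_of_RiemannInt_le g T :
  (forall a b, 0 < a -> a <= b -> b < 1 -> Riemann_integrable g a b) ->
  (forall a b (pr : Riemann_integrable g a b), 0 < a -> a <= b -> b < 1 -> RiemannInt pr <= T) ->
  exists I, Int01 g I /\ 0 <= I <= T.
Proof.
  intros Hint Hle.
  set (S := fun y => exists a b (pr : Riemann_integrable g a b),
              0 < a /\ a <= b /\ b < 1 /\ y = RiemannInt pr).
  assert (HS0 : S 0).
  { exists (1/2), (1/2), (Hint (1/2) (1/2) ltac:(lra) ltac:(lra) ltac:(lra)).
    split; [lra|split; [lra|split; [lra|]]]. rewrite RiemannInt_P9. reflexivity. }
  assert (HST : is_upper_bound S T).
  { intros y [a [b [pr [Ha [Hab [Hb ->]]]]]]. apply Hle; assumption. }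
  destruct (completeness S (ex_intro _ T HST) (ex_intro _ 0 HS0)) as [I [Hub Hleast]].
  exists I. split; [split|split; [apply Hub, HS0|apply Hleast, HST]].
  - intros a b Ha Hab Hb. exists (Hint a b Ha Hab Hb). apply Hub.
    exists a, b, (Hint a b Ha Hab Hb). repeat split; assumption.
  - intros e He. apply NNPP. intros Hno.
    enough (I <= I - e) by lra. apply Hleast.
    intros y [a [b [pr [Ha [Hab [Hb ->]]]]]].
    destruct (Rle_lt_dec (RiemannInt pr) (I - e)) as [|Hgt]; [assumption|].
    exfalso. apply Hno. exists a, b. repeat (split; [assumption|]). exists pr. exact Hgt.
Qed.

Lemma RiemannInt_le_tails_middle (g h : R -> R) J C K Mid a0 b0 del :
  0 <= C -> 0 <= K -> 0 <= Mid -> 0 < a0 <= b0 -> b0 < 1 ->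
  (forall a b, 0 < a -> a <= b -> b < 1 -> Riemann_integrable g a b) ->
  Int01 h J -> (forall t, 0 < t < 1 -> 0 <= g t) ->
  (forall t, 0 < t < 1 -> g t <= C * (h t + K)) ->
  (forall t, a0 <= t <= b0 -> g t <= Mid) ->
  (forall c d (pr : Riemann_integrable h c d), 0 < c -> c <= d -> d < 1 ->
     d <= a0 \/ b0 <= c -> RiemannInt pr <= del) ->
  forall a b (pr : Riemann_integrable g a b), 0 < a -> a <= b -> b < 1 ->
    RiemannInt pr <= C * (2 * del + K * (a0 + (1 - b0))) + Mid.
Proof.
  intros HC HK HMid Ha0 Hb0 Hgint [Hhint _] Hg Hdom Hmid Htail a b pr Ha Hab Hb.
  set (a' := Rmin a a0). set (b' := Rmax b b0).
  assert (Ha' : 0 < a') by (apply Rmin_pos; lra).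
  assert (Ha'a := Rmin_l a a0). assert (Ha'a0 := Rmin_r a a0).
  assert (Hbb' := Rmax_l b b0). assert (Hb0b' := Rmax_r b b0).
  fold a' in Ha'a, Ha'a0. fold b' in Hbb', Hb0b'.
  assert (Hb' : b' < 1) by (apply Rmax_lub_lt; lra).
  set (prbig := Hgint a' b' Ha' ltac:(lra) Hb').
  assert (Henlarge : RiemannInt pr <= RiemannInt prbig)
    by (apply RiemannInt_le_subinterval; [lra|lra|lra|intros; apply Hg; lra]).
  destruct (RiemannInt_split3 g a' a0 b0 b' prbig Ha'a0 ltac:(lra) Hb0b') as [p1 [p2 [p3 E]]].
  assert (Hmiddle : RiemannInt p2 <= Mid).
  { eapply Rle_trans; [apply RiemannInt_le_const; [lra|intros t Ht; apply Hmid; lra]|].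
    assert (b0 - a0 <= 1) by lra. nra. }
  destruct (Hhint a' a0 Ha' Ha'a0 ltac:(lra)) as [q1 _].
  destruct (Hhint b0 b' ltac:(lra) Hb0b' Hb') as [q3 _].
  assert (Hq1 : RiemannInt q1 <= del) by (apply Htail; lra).
  assert (Hq3 : RiemannInt q3 <= del) by (apply Htail; lra).
  assert (Hleft : RiemannInt p1 <= C * (RiemannInt q1 + K * (a0 - a')))
    by (apply RiemannInt_le_affine; [lra|intros; apply Hdom; lra]).
  assert (Hright : RiemannInt p3 <= C * (RiemannInt q3 + K * (b' - b0)))
    by (apply RiemannInt_le_affine; [lra|intros; apply Hdom; lra]).
  assert (RiemannInt q1 + K * (a0 - a') + (RiemannInt q3 + K * (b' - b0))
          <= 2 * del + K * (a0 + (1 - b0))) by nra.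
  assert (C * (RiemannInt q1 + K * (a0 - a')) + C * (RiemannInt q3 + K * (b' - b0))
          <= C * (2 * del + K * (a0 + (1 - b0)))) by nra.
  lra.
Qed.

Lemma approx_supp_uniform F (x : nat -> nat -> R) : approx_supp F x ->
  forall h A B, 0 < h -> exists N, forall n, (n >= N)%nat ->
    forall z, in_supp F z -> A <= z <= B -> exists j, (j < n)%nat /\ Rabs (z - x n j) < h.
Proof.
  intros Hap h A B Hh.
  set (w := h / 2). assert (Hw : 0 < w) by (unfold w; lra).
  assert (Hgrid : forall k : nat, exists N, forall n, (n >= N)%nat ->
    forall z, in_supp F z -> A <= z <= A + INR k * w -> exists j, (j < n)%nat /\ Rabs (z - x n j) < h).
  { induction k as [|k [N1 HN1]].
    - destruct (classic (in_supp F A)) as [HA|HA].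
      + destruct (Hap A HA h Hh) as [N1 HN1]. exists N1. intros n Hn z Hz Hz'.
        simpl in Hz'. replace z with A by lra. apply HN1, Hn.
      + exists O. intros n _ z Hz Hz'. simpl in Hz'. replace z with A in Hz by lra. contradiction.
    - destruct (classic (exists y, in_supp F y /\ A + INR k * w <= y <= A + INR (S k) * w))
        as [[y [Hy Hy']]|Hnone].
      + destruct (Hap y Hy w Hw) as [N2 HN2]. exists (max N1 N2). intros n Hn z Hz Hz'.
        destruct (Rle_lt_dec z (A + INR k * w)).
        * apply (HN1 n ltac:(lia)); [assumption|lra].
        * destruct (HN2 n ltac:(lia)) as [j [Hj Hj']]. exists j. split; [assumption|].
          rewrite S_INR in Hy', Hz'.
          assert (Rabs (z - y) <= w) by (unfold Rabs; destruct Rcase_abs; lra).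
          replace (z - x n j) with ((z - y) + (y - x n j)) by ring.
          eapply Rle_lt_trans; [apply Rabs_triang|]. unfold w in *; lra.
      + exists N1. intros n Hn z Hz Hz'.
        destruct (Rle_lt_dec z (A + INR k * w)).
        * apply (HN1 n Hn); [assumption|lra].
        * exfalso. apply Hnone. exists z. split; [assumption|lra]. }
  destruct (exists_nat_gt ((B - A) / w)) as [k Hk].
  destruct (Hgrid k) as [N HN]. exists N. intros n Hn z Hz Hz'.
  apply (HN n Hn z Hz). split; [lra|].
  assert (B - A <= INR k * w).
  { apply Rmult_lt_compat_r with (r := w) in Hk; [|exact Hw].
    replace ((B - A) / w * w) with (B - A) in Hk by (field; lra). lra. }
  lra.
Qed.

(* Comparing with an atom near the median of [F] bounds the cost by
   [2^r (|F^-1|^r + const)], whose tails are small. *)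
Lemma nearest_cost_integral_le r F (x : nat -> nat -> R) J : 0 < r -> is_cdf F ->
  Int01 (fun t => rpow (Rabs (quantile F t)) r) J ->
  (forall n, (1 <= n)%nat -> in_Xi n (x n)) -> approx_supp F x ->
  forall T, 0 < T -> exists N, forall n, (n >= N)%nat -> (1 <= n)%nat /\
    forall a b (pr : Riemann_integrable (nearest_cost F n (x n) r) a b),
      0 < a -> a <= b -> b < 1 -> RiemannInt pr <= T.
Proof.
  intros Hr HF HJ HX Hap T HT.
  set (y0 := quantile F (1/2)).
  destruct (Hap y0 (quantile_in_supp F HF (1/2) ltac:(lra)) 1 ltac:(lra)) as [N0 HN0].
  set (K := rpow (Rabs y0 + 1) r). assert (HK : 0 <= K) by apply rpow_ge_0.
  set (C := rpow 2 r). assert (HC : 0 < C) by (apply rpow_gt_0; lra).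
  set (del := T / (8 * C)). assert (Hdel : 0 < del) by (apply Rdiv_lt_0_compat; lra).
  destruct (Int01_tails_le _ J HJ (fun t _ => rpow_ge_0 _ r) del Hdel)
    as [al [be [Hal [Hbe Htail]]]].
  destruct (exists_small_pos (8 * C * K) T ltac:(nra) HT) as [tau [[Htau Htau2] HCKtau]].
  set (a0 := Rmin al tau). set (b0 := Rmax be (1 - tau)).
  assert (Ha0 : 0 < a0) by (apply Rmin_pos; lra).
  assert (Ha0al := Rmin_l al tau). assert (Ha0tau := Rmin_r al tau).
  assert (Hbeb0 := Rmax_l be (1 - tau)). assert (Htaub0 := Rmax_r be (1 - tau)).
  fold a0 in Ha0al, Ha0tau. fold b0 in Hbeb0, Htaub0.
  assert (Hb0 : b0 < 1) by (apply Rmax_lub_lt; lra).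
  set (eta := rpow (T / 2) (1 / r)).
  assert (Heta : 0 < eta) by (apply rpow_gt_0; lra).
  destruct (approx_supp_uniform F x Hap eta (quantile F a0) (quantile F b0) Heta) as [N1 HN1].
  exists (max N0 (max N1 1)). intros n Hn. split; [lia|].
  assert (Hn1 : (1 <= n)%nat) by lia.
  destruct (HN0 n ltac:(lia)) as [j0 [Hj0 Hj0']].
  assert (Hxj0 : Rabs (x n j0) <= Rabs y0 + 1).
  { replace (x n j0) with (y0 - (y0 - x n j0)) by ring.
    unfold Rminus at 1. eapply Rle_trans; [apply Rabs_triang|]. rewrite Rabs_Ropp. lra. }
  intros a b pr Ha Hab Hb.
  eapply Rle_trans.
  { apply (RiemannInt_le_tails_middle _ (fun t => rpow (Rabs (quantile F t)) r) J C K (T / 2) a0 b0 del);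
      try (assumption || lra).
    - intros c d Hc Hcd Hd. apply nearest_cost_integrable; auto.
    - intros t _. apply rpow_ge_0.
    - intros t Ht. apply (nearest_cost_le_affine F n (x n)) with (j := j0) (L := Rabs y0 + 1); auto.
    - intros t Ht. assert (Ht' : 0 < t < 1) by lra.
      destruct (HN1 n ltac:(lia) (quantile F t) (quantile_in_supp F HF t Ht'))
        as [j [Hj Hj']]; [split; apply quantile_le_compat; auto; lra|].
      eapply Rle_trans; [apply (nearest_cost_le F n (x n)); eauto|].
      rewrite <- (rpow_inv_rpow (T / 2) r) by lra.
      apply rpow_le_compat; [lra|apply Rabs_pos|unfold eta in Hj'; lra].
    - intros c d pr' Hc Hcd Hd Hside. apply Htail; [lra..|lra]. }
  assert (C * (2 * del) = T / 4) by (unfold del; field; lra).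
  assert (C * K * (a0 + (1 - b0)) <= C * K * (2 * tau))
    by (apply Rmult_le_compat_l; [apply Rmult_le_pos|]; lra).
  nra.
Qed.

Lemma min_dist_cv_of_approx_supp r F (x : nat -> nat -> R) (m : nat -> R) :
  0 < r -> in_Pr r F ->
  (forall n, (1 <= n)%nat -> in_Xi n (x n)) ->
  (forall n, (1 <= n)%nat -> is_min_dist r n (x n) F (m n)) ->
  approx_supp F x -> Un_cv m 0.
Proof.
  intros Hr [HF [J HJ]] HX Hmin Hap eps Heps.
  set (T := rpow (eps / 2) r). assert (HT : 0 < T) by (apply rpow_gt_0; lra).
  destruct (nearest_cost_integral_le r F x J Hr HF HJ HX Hap T HT) as [N HN].
  exists N. intros n Hn. destruct (HN n Hn) as [Hn1 Hle].
  assert (Hx := HX n Hn1).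
  destruct (Int01_of_RiemannInt_le (nearest_cost F n (x n) r) T) as [I [HI [HI0 HIT]]];
    [intros; apply nearest_cost_integrable; auto|exact Hle|].
  destruct (Hmin n Hn1) as [[p [d [_ [[I' [_ Hd]] Hmd]]]] Hminimal].
  assert (Hm_le : m n <= rpow I (1 / r)).
  { apply (Hminimal (nearest_weights F n (x n))); [apply nearest_weights_in_Pi; assumption|].
    exists I. split; [exact HI|reflexivity]. }
  assert (0 <= m n) by (rewrite Hmd, Hd; apply rpow_ge_0).
  assert (rpow I (1 / r) <= eps / 2).
  { rewrite <- (rpow_rpow_inv (eps / 2) r) by lra.
    apply rpow_le_compat; [apply Rdiv_lt_0_compat; lra|lra|exact HIT]. }
  unfold R_dist. rewrite Rminus_0_r, Rabs_pos_eq by assumption. lra.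
Qed.

Theorem theorem5p3 (r : R) (F : R -> R) (x : nat -> nat -> R) (m : nat -> R) :
  1 <= r ->
  in_Pr r F ->
  (forall n, (1 <= n)%nat -> in_Xi n (x n)) ->
  (forall n, (1 <= n)%nat -> is_min_dist r n (x n) F (m n)) ->
  (Un_cv m 0 <-> approx_supp F x) /\
  (Un_cv (fun n => F (x n O) + maxgap n (x n) + 1 - F (x n (Nat.pred n))) 0 ->
     approx_supp F x).
Proof.
  intros Hr HP HX Hmin.
  assert (Hr0 : 0 < r) by lra.
  assert (HF : is_cdf F) by apply (proj1 HP).
  split; [split|].
  - apply (approx_supp_of_min_dist_cv r F x m); assumption.
  - apply (min_dist_cv_of_approx_supp r F x m); assumption.
  - apply approx_supp_of_gaps_cv, HF.
Qed.
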